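(* Let $(a_j)_{j\ge1}$ be a bounded sequence of nonnegative integers. If there exists a positive integer $q$ such that $a_j\le a_{j+q}$ for all $j\geq1$, then $(a_j)_{j\ge1}$ is strongly eventually periodic.
   Context: A sequence $(a_j)_{j\ge1}$ of integers is strongly eventually periodic (SEP) if there exist a positive integer $p$, a finite sequence of integers $(b_\ell)_{\ell=1}^p$ and a finite sequence of nonnegative integers $(c_\ell)_{\ell=1}^p$ such that $(a_j)_{j\ge1}$ equals $b_1,\ldots,b_p$ followed by the infinite repetition of $b_1+c_1,\ldots,b_p+c_p$. *)

From Stdlib Require Import ZArith Lia.
Open Scope Z_scope.

(* A sequence (a_j)_{j>=1} of integers is represented by a : nat -> Z,
   only values at indices j >= 1 matter.  Finite sequences (b_l)_{l=1}^p and
   (c_l)_{l=1}^p are represented by functions nat -> Z, read at l = 1..p. *)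
Definition SEP (a : nat -> Z) : Prop :=
  exists (p : nat) (b c : nat -> Z),
    (0 < p)%nat /\
    (forall l : nat, (1 <= l <= p)%nat -> 0 <= c l) /\
    (forall l : nat, (1 <= l <= p)%nat -> a l = b l) /\
    (forall (k l : nat), (1 <= k)%nat -> (1 <= l <= p)%nat ->
        a (k * p + l)%nat = b l + c l).

(* Along each residue class modulo q the subsequence k |-> a (r + k q) is
   nondecreasing and bounded, hence eventually constant.  Taking the largest
   of the q thresholds, a is eventually q-periodic.  A period p that is a
   multiple of q and exceeds the threshold then exhibits a as SEP, with
   b = a on the first block and c l = a (p + l) - a l >= 0 because a is
   nondecreasing along steps of q. *)
From Stdlib Require Import ZArith.
From Stdlib Require Import Lia Classical.
Open Scope Z_scope.

Lemma nondecreasing_le (f : nat -> Z) :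
  (forall k, f k <= f (S k)) -> forall i j, (i <= j)%nat -> f i <= f j.
Proof.
  intros f_le i j ij.
  induction ij as [|j _ IH]; [lia|].
  specialize (f_le j). lia.
Qed.

Lemma nondecreasing_bounded_eventually_constant (f : nat -> Z) (M : Z) :
  (forall k, f k <= f (S k)) -> (forall k, f k <= M) ->
  exists K, forall k, (K <= k)%nat -> f k = f K.
Proof.
  intros f_le f_bound.
  (* Induction on the gap M - f 0, which drops whenever f is not constant. *)
  enough (gap : forall n (g : nat -> Z),
             (forall k, g k <= g (S k)) -> (forall k, g k <= M) ->
             (Z.to_nat (M - g 0%nat) <= n)%nat ->
             exists K, forall k, (K <= k)%nat -> g k = g K)
    by exact (gap _ f f_le f_bound (le_n _)).
  induction n as [|n IH]; intros g g_le g_bound gap_n.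
  - exists 0%nat. intros k _.
    assert (g 0%nat <= g k) by (apply nondecreasing_le; auto; lia).
    specialize (g_bound k). lia.
  - destruct (classic (forall k, g k = g 0%nat)) as [g_const | [k0 g_k0]%not_all_ex_not].
    + exists 0%nat. auto.
    + assert (g 0%nat <= g k0) by (apply nondecreasing_le; auto; lia).
      destruct (IH (fun k => g (k + k0)%nat)) as [K HK].
      * intros k. apply g_le.
      * intros k. apply g_bound.
      * simpl. specialize (g_bound 0%nat). lia.
      * exists (K + k0)%nat. intros k Hk.
        specialize (HK (k - k0)%nat ltac:(lia)). simpl in HK.
        now replace (k - k0 + k0)%nat with k in HK by lia.
Qed.

Lemma uniform_threshold (P : nat -> nat -> Prop) (n : nat) :
  (forall r, (1 <= r <= n)%nat -> exists K, forall k, (K <= k)%nat -> P r k) ->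
  exists K, forall r k, (1 <= r <= n)%nat -> (K <= k)%nat -> P r k.
Proof.
  induction n as [|n IH]; intros threshold.
  - exists 0%nat. intros; lia.
  - destruct IH as [K1 HK1]; [intros r Hr; apply threshold; lia|].
    destruct (threshold (S n)) as [K2 HK2]; [lia|].
    exists (K1 + K2)%nat. intros r k Hr Hk.
    destruct (Nat.eq_dec r (S n)) as [->|r_ne]; [apply HK2 | apply HK1]; lia.
Qed.

Lemma residue_decomposition (q j : nat) :
  (0 < q)%nat -> (1 <= j)%nat ->
  exists r k, (1 <= r <= q)%nat /\ j = (r + k * q)%nat.
Proof.
  intros q_pos j_pos.
  exists ((j - 1) mod q + 1)%nat, ((j - 1) / q)%nat.
  pose proof (Nat.div_mod (j - 1) q ltac:(lia)).
  pose proof (Nat.mod_upper_bound (j - 1) q ltac:(lia)).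
  lia.
Qed.

Section StepMonotone.

Variables (a : nat -> Z) (q : nat).
Hypothesis q_pos : (0 < q)%nat.
Hypothesis step_le : forall j, (1 <= j)%nat -> a j <= a (j + q)%nat.

Lemma step_le_progression (j : nat) :
  (1 <= j)%nat -> forall k, a (j + k * q)%nat <= a (j + S k * q)%nat.
Proof.
  intros j_pos k.
  replace (j + S k * q)%nat with (j + k * q + q)%nat by lia.
  apply step_le. lia.
Qed.

Lemma step_le_iter (m j : nat) : (1 <= j)%nat -> a j <= a (j + m * q)%nat.
Proof.
  intros j_pos.
  pose proof (nondecreasing_le (fun k => a (j + k * q)%nat)
                (step_le_progression j j_pos) 0 m ltac:(lia)) as le_0m.
  simpl in le_0m. now rewrite Nat.add_0_r in le_0m.
Qed.

Lemma eventually_step_periodic (M : Z) :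
  (forall j, (1 <= j)%nat -> a j <= M) ->
  exists N, forall j, (N <= j)%nat -> a (j + q)%nat = a j.
Proof.
  intros bound.
  destruct (uniform_threshold (fun r k => a (r + S k * q)%nat = a (r + k * q)%nat) q)
    as [K HK].
  - intros r Hr.
    destruct (nondecreasing_bounded_eventually_constant
                (fun k => a (r + k * q)%nat) M (step_le_progression r ltac:(lia)))
      as [K HK]; [intros k; apply bound; lia|].
    exists K. intros k Hk. rewrite (HK k Hk), (HK (S k)); auto.
  - exists (1 + K * q)%nat. intros j Hj.
    destruct (residue_decomposition q j q_pos ltac:(lia)) as (r & k & Hr & ->).
    replace (r + k * q + q)%nat with (r + S k * q)%nat by lia.
    apply HK; nia.
Qed.

Variable N : nat.
Hypothesis step_periodic : forall j, (N <= j)%nat -> a (j + q)%nat = a j.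

Lemma step_periodic_iter (m j : nat) : (N <= j)%nat -> a (j + m * q)%nat = a j.
Proof.
  intros Hj. induction m as [|m IH]; [now rewrite Nat.add_0_r|].
  replace (j + S m * q)%nat with (j + m * q + q)%nat by lia.
  rewrite step_periodic by lia. exact IH.
Qed.

Lemma SEP_of_eventually_step_periodic : SEP a.
Proof.
  set (p := (S N * q)%nat).
  exists p, a, (fun l => a (p + l)%nat - a l).
  split; [|split; [|split]].
  - unfold p. nia.
  - intros l Hl. unfold p. rewrite Nat.add_comm.
    pose proof (step_le_iter (S N) l ltac:(lia)). lia.
  - reflexivity.
  - intros [|k] l Hk Hl; [lia|].
    replace (S k * p + l)%nat with ((p + l) + (k * S N) * q)%nat by (unfold p; nia).
    rewrite step_periodic_iter by (unfold p; nia). lia.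
Qed.

End StepMonotone.

Theorem lemma5p2 (a : nat -> Z)
  (hnonneg : forall j : nat, (1 <= j)%nat -> 0 <= a j)
  (hbdd : exists M : Z, forall j : nat, (1 <= j)%nat -> a j <= M)
  (hq : exists q : nat, (0 < q)%nat /\
          forall j : nat, (1 <= j)%nat -> a j <= a (j + q)%nat) :
  SEP a.
Proof.
  destruct hbdd as [M bound], hq as [q [q_pos step_le]].
  destruct (eventually_step_periodic a q q_pos step_le M bound) as [N step_periodic].
  exact (SEP_of_eventually_step_periodic a q q_pos step_le N step_periodic).
Qed.
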